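(* Let $Y$ be a real Banach lattice. The following conditions are equivalent: 1) $Y$ is uniformly monotone. 2) For every $0<\varepsilon<1$ there is $\eta(\varepsilon)>0$ such that whenever $u\in Y$, $v\in Y$ with $\Vert v\Vert=1$, $0\le u\le v$ and $\Vert v-u\Vert>1-\eta(\varepsilon)$, then $\Vert u\Vert\le\varepsilon$. 3) For every $0<\varepsilon<1$ there is $\eta(\varepsilon)>0$ such that whenever $u,v\in Y$ with $0\le u\le v$ and $\Vert v-u\Vert>(1-\eta(\varepsilon))\Vert v\Vert$, then $\Vert u\Vert\le\varepsilon\Vert v\Vert$. Moreover, if 2) holds with $\eta$, then $Y$ is uniformly monotone with $\delta(\varepsilon)=\eta(\varepsilon/2)$; and if $Y$ is uniformly monotone with $\delta(\varepsilon)$, then conditions 2) and 3) hold with $\eta(\varepsilon)=\frac{\delta(\varepsilon)}{1+\delta(\varepsilon)}$.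
   Context: A Banach lattice $E$ is uniformly monotone if for every $\varepsilon>0$ there is $\delta(\varepsilon)>0$ such that whenever $x\in E$ with $\Vert x\Vert=1$, $y\in E$, $x,y\ge0$, and $\Vert x+y\Vert\le 1+\delta(\varepsilon)$, then $\Vert y\Vert\le\varepsilon$; we then say $E$ is uniformly monotone with $\delta$. *)

From HB Require Import structures.
From mathcomp Require Import all_boot all_order all_algebra.
From mathcomp Require Import all_classical all_reals all_analysis.
Set Implicit Arguments. Unset Strict Implicit. Unset Printing Implicit Defensive.
Import Order.TTheory GRing.Theory Num.Theory.
Import numFieldNormedType.Exports.
Local Open Scope ring_scope.

Definition is_sup {T : Type} (le : T -> T -> Prop) (x y s : T) : Prop :=
  [/\ le x s, le y s & forall z, le x z -> le y z -> le s z].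

Definition vector_lattice_order {R : realType} {E : lmodType R}
  (le : E -> E -> Prop) : Prop :=
  [/\ (forall x, le x x),
      (forall x y, le x y -> le y x -> x = y) /\
      (forall x y z, le x y -> le y z -> le x z),
      (forall x y z, le x y -> le (x + z) (y + z)),
      (forall (a : R) x y, 0 <= a -> le x y -> le (a *: x) (a *: y)) &
      (forall x y, exists s, is_sup le x y s)].

Definition lattice_norm {R : realType} {E : normedModType R}
  (le : E -> E -> Prop) : Prop :=
  forall x y ax ay, is_sup le x (- x) ax -> is_sup le y (- y) ay ->
    le ax ay -> `|x| <= `|y|.

Definition banach_lattice {R : realType} {E : completeNormedModType R}
  (le : E -> E -> Prop) : Prop :=
  vector_lattice_order le /\ lattice_norm le.

Definition UM_at {R : realType} {E : normedModType R}
  (le : E -> E -> Prop) (eps d : R) : Prop :=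
  0 < d /\ forall x y : E, `|x| = 1 -> le 0 x -> le 0 y ->
    `|x + y| <= 1 + d -> `|y| <= eps.

Definition uniformly_monotone_with {R : realType} {E : normedModType R}
  (le : E -> E -> Prop) (delta : R -> R) : Prop :=
  forall eps : R, 0 < eps -> UM_at le eps (delta eps).

Definition uniformly_monotone {R : realType} {E : normedModType R}
  (le : E -> E -> Prop) : Prop :=
  exists delta : R -> R, uniformly_monotone_with le delta.

Definition cond2_with {R : realType} {E : normedModType R}
  (le : E -> E -> Prop) (eta : R -> R) : Prop :=
  forall eps : R, 0 < eps < 1 -> 0 < eta eps /\
    forall u v : E, `|v| = 1 -> le 0 u -> le u v ->
      `|v - u| > 1 - eta eps -> `|u| <= eps.

Definition cond2 {R : realType} {E : normedModType R}
  (le : E -> E -> Prop) : Prop :=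
  exists eta : R -> R, cond2_with le eta.

Definition cond3_with {R : realType} {E : normedModType R}
  (le : E -> E -> Prop) (eta : R -> R) : Prop :=
  forall eps : R, 0 < eps < 1 -> 0 < eta eps /\
    forall u v : E, le 0 u -> le u v ->
      `|v - u| > (1 - eta eps) * `|v| -> `|u| <= eps * `|v|.

Definition cond3 {R : realType} {E : normedModType R}
  (le : E -> E -> Prop) : Prop :=
  exists eta : R -> R, cond3_with le eta.

From HB Require Import structures.
From mathcomp Require Import all_boot all_order all_algebra.
From mathcomp Require Import all_classical all_reals all_analysis.
From mathcomp Require Import ring lra.
Import Order.TTheory GRing.Theory Num.Theory.
Import numFieldNormedType.Exports.
Local Open Scope ring_scope.

Set Implicit Arguments.
Unset Strict Implicit.

(* All three conditions are positively homogeneous statements about pairs of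
   positive vectors, so each may be checked after rescaling one vector to
   norm 1.  The substitution x := (v - u) / |v - u|, y := u / |v - u|, which
   turns x + y into v / |v - u|, translates uniform monotonicity into
   condition 2) and back; conditions 2) and 3) differ only by the rescaling
   v := v / |v|. *)

Definition vector_preorder {R : realType} {E : lmodType R}
    (le : E -> E -> Prop) : Prop :=
  [/\ forall x, le x x,
      forall x y z, le x y -> le y z -> le x z,
      forall x y z, le x y -> le (x + z) (y + z) &
      forall (a : R) x y, 0 <= a -> le x y -> le (a *: x) (a *: y)].

Definition monotone_norm {R : realType} {E : normedModType R}
    (le : E -> E -> Prop) : Prop :=
  forall u v : E, le 0 u -> le u v -> `|u| <= `|v|.

Section VectorPreorder.
Variables (R : realType) (E : lmodType R) (le : E -> E -> Prop).
Hypothesis hle : vector_preorder le.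

Lemma lev_refl x : le x x.
Proof. by case: hle. Qed.

Lemma lev_trans x y z : le x y -> le y z -> le x z.
Proof. by case: hle => _ htrans _ _; apply: htrans. Qed.

Lemma levD2r x y z : le x y -> le (x + z) (y + z).
Proof. by case: hle => _ _ hadd _; apply: hadd. Qed.

Lemma levZ (a : R) x y : 0 <= a -> le x y -> le (a *: x) (a *: y).
Proof. by case: hle => _ _ _ hscale; apply: hscale. Qed.

Lemma scalev_ge0 (a : R) x : 0 <= a -> le 0 x -> le 0 (a *: x).
Proof. by move=> a_ge0 /(levZ a_ge0); rewrite scaler0. Qed.

Lemma subv_ge0 u v : le u v -> le 0 (v - u).
Proof. by move=> /(levD2r (- u)); rewrite subrr. Qed.

Lemma levDl x y : le 0 y -> le x (x + y).
Proof. by move=> /(levD2r x); rewrite add0r addrC. Qed.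

Lemma gevBl u v : le 0 u -> le (v - u) v.
Proof. by move=> /(levDl (v - u)); rewrite subrK. Qed.

End VectorPreorder.

Section MonotoneNormedSpace.
Variables (R : realType) (E : normedModType R) (le : E -> E -> Prop).
Hypotheses (hle : vector_preorder le) (norm_lev : monotone_norm le).

Lemma cond2_eta_le1 eta eps v : cond2_with le eta -> 0 < eps < 1 ->
  `|v| = 1 -> le 0 v -> eta eps <= 1.
Proof.
move=> H2 eps01 nv v_ge0; have [_ Hc] := H2 eps eps01.
rewrite leNgt; apply/negP => eta_gt1.
have := Hc v v nv v_ge0 (lev_refl hle v); rewrite subrr normr0 nv.
by case/andP: eps01 => _ eps_lt1 /(_ ltac:(lra)); lra.
Qed.

Lemma cond2_cond3_with eta : cond2_with le eta -> cond3_with le eta.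
Proof.
move=> H2 eps eps01; have [eta_gt0 Hc] := H2 eps eps01.
split=> // u v u_ge0 le_uv Hvu.
have nu_le := norm_lev u_ge0 le_uv.
have [nv0|nv_neq0] := eqVneq `|v| 0.
  by rewrite nv0 mulr0; rewrite nv0 in nu_le.
have nv_gt0 : 0 < `|v| by rewrite lt_def nv_neq0 normr_ge0.
have iv_ge0 : 0 <= `|v|^-1 by rewrite invr_ge0 ltW.
have := Hc _ _ _ (scalev_ge0 hle iv_ge0 u_ge0) (levZ hle iv_ge0 le_uv).
rewrite -scalerBr !normrZ ger0_norm // mulVf // ltr_pdivlMl // ler_pdivrMl //.
by rewrite [eps * _]mulrC [_ * (1 - _)]mulrC => /(_ erefl); apply.
Qed.

Lemma cond3_cond2_with eta : cond3_with le eta -> cond2_with le eta.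
Proof.
move=> H3 eps eps01; have [eta_gt0 Hc] := H3 eps eps01.
by split=> // u v nv u_ge0 le_uv; have := Hc u v u_ge0 le_uv; rewrite nv !mulr1.
Qed.

Lemma cond2_UM_at eta eps : cond2_with le eta -> 0 < eps < 2 ->
  UM_at le eps (eta (eps / 2)).
Proof.
move=> H2 /andP[eps_gt0 eps_lt2].
have eps2 : 0 < eps / 2 < 1 by apply/andP; split; lra.
have [d_gt0 Hc] := H2 _ eps2; split=> // x y nx x_ge0 y_ge0.
have d_le1 := cond2_eta_le1 H2 eps2 nx x_ge0.
have le_y_xy : le y (x + y) by move: (levDl hle y x_ge0); rewrite addrC.
have nxy_ge1 : 1 <= `|x + y| by rewrite -nx; exact: norm_lev x_ge0 (levDl hle x y_ge0).
set N := `|x + y| in nxy_ge1 *; set d := eta (eps / 2) in d_gt0 d_le1 Hc *.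
have N_gt0 : 0 < N by lra.
have iN_ge0 : 0 <= N^-1 by rewrite invr_ge0 ltW.
have NiN : N * N^-1 = 1 by rewrite mulfV ?gt_eqF.
have := Hc _ _ _ (scalev_ge0 hle iN_ge0 y_ge0) (levZ hle iN_ge0 le_y_xy).
rewrite -scalerBr addrK !normrZ ger0_norm // mulVf ?gt_eqF // nx mulr1.
rewrite ler_pdivrMl // => /(_ erefl) Hy N_le.
(* [(1 - d) N <= (1 - d) (1 + d) < 1], and [N eps / 2 <= (1 + d) eps / 2 <= eps]
   since [d <= 1]. *)
have := Hy ltac:(nra); nra.
Qed.

Lemma uniformly_monotone_cond2_with delta : uniformly_monotone_with le delta ->
  cond2_with le (fun eps => delta eps / (1 + delta eps)).
Proof.
move=> HU eps /andP[eps_gt0 _]; have [d_gt0 Hd] := HU eps eps_gt0.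
set d := delta eps in d_gt0 Hd *.
have d1_gt0 : 0 < 1 + d by lra.
split=> [|u v nv u_ge0 le_uv]; first by rewrite divr_gt0.
have -> : 1 - d / (1 + d) = (1 + d)^-1 by field; rewrite gt_eqF.
have w_ge0 := subv_ge0 hle le_uv.
have W_le1 : `|v - u| <= 1 by rewrite -nv; exact: norm_lev w_ge0 (gevBl hle v u_ge0).
set W := `|v - u| in W_le1 * => W_gt.
have W_gt0 : 0 < W by rewrite (lt_trans _ W_gt) ?invr_gt0.
have iW_ge0 : 0 <= W^-1 by rewrite invr_ge0 ltW.
have := Hd _ _ _ (scalev_ge0 hle iW_ge0 w_ge0) (scalev_ge0 hle iW_ge0 u_ge0).
rewrite -scalerDr subrK !normrZ ger0_norm // nv mulr1 mulVf ?gt_eqF //.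
rewrite ler_pdivrMl // invf_ple ?posrE // => /(_ erefl (ltW W_gt)) Hu.
by rewrite (le_trans Hu) // ler_piMl // ltW.
Qed.

Lemma UM_at_widen eps eps' d : eps <= eps' -> UM_at le eps d -> UM_at le eps' d.
Proof.
move=> le_eps [d_gt0 Hd]; split=> // x y nx x_ge0 y_ge0 Hxy.
exact: le_trans (Hd x y nx x_ge0 y_ge0 Hxy) le_eps.
Qed.

Lemma cond2_uniformly_monotone : cond2 le -> uniformly_monotone le.
Proof.
case=> eta H2; exists (fun eps => eta (Num.min eps 1 / 2)) => eps eps_gt0.
have min_le1 : Num.min eps 1 <= 1 by rewrite ge_min lexx orbT.
apply: (@UM_at_widen (Num.min eps 1)); first by rewrite ge_min lexx.
by apply: cond2_UM_at; rewrite // lt_min eps_gt0 ltr01 (le_lt_trans min_le1) ?ltr1n.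
Qed.

Lemma uniformly_monotone_cond2 : uniformly_monotone le -> cond2 le.
Proof. by case=> delta /uniformly_monotone_cond2_with H2; eexists; exact: H2. Qed.

Lemma cond2_cond3 : cond2 le <-> cond3 le.
Proof.
split=> -[eta H]; exists eta; first exact: cond2_cond3_with.
exact: cond3_cond2_with.
Qed.

End MonotoneNormedSpace.

Lemma banach_lattice_vector_preorder (R : realType)
    (E : completeNormedModType R) (le : E -> E -> Prop) :
  banach_lattice le -> vector_preorder le.
Proof. by case=> -[refl [_ trans] add scale _] _; split. Qed.

Lemma banach_lattice_monotone_norm (R : realType)
    (E : completeNormedModType R) (le : E -> E -> Prop) :
  banach_lattice le -> monotone_norm le.
Proof.
move=> /[dup] hE [_ hnorm] u v u_ge0 le_uv.
have hle := banach_lattice_vector_preorder hE.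
have abs_ge0 x : le 0 x -> is_sup le x (- x) x.
  move=> x_ge0; split=> //; first exact: lev_refl.
  have negx_le0 : le (- x) 0 by move: (levD2r hle (- x) x_ge0); rewrite add0r subrr.
  exact (lev_trans hle negx_le0 x_ge0).
exact: hnorm (abs_ge0 _ u_ge0) (abs_ge0 _ (lev_trans hle u_ge0 le_uv)) le_uv.
Qed.

Theorem proposition4p2 (R : realType) (Y : completeNormedModType R)
  (le : Y -> Y -> Prop) (hY : banach_lattice le) :
  [/\ (uniformly_monotone le <-> cond2 le),
      (uniformly_monotone le <-> cond3 le),
      (forall eta : R -> R, cond2_with le eta ->
         forall eps : R, 0 < eps < 2 -> UM_at le eps (eta (eps / 2))) &
      (forall delta : R -> R, uniformly_monotone_with le delta ->
         cond2_with le (fun eps => delta eps / (1 + delta eps)) /\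
         cond3_with le (fun eps => delta eps / (1 + delta eps)))].
Proof.
have hle := banach_lattice_vector_preorder hY.
have norm_lev := banach_lattice_monotone_norm hY.
have UM_cond2 : uniformly_monotone le <-> cond2 le.
  split; [exact: uniformly_monotone_cond2 | exact: cond2_uniformly_monotone].
split; first exact: UM_cond2.
- exact: iff_trans UM_cond2 (cond2_cond3 hle norm_lev).
- by move=> eta H2 eps; apply: cond2_UM_at.
- move=> delta /(uniformly_monotone_cond2_with hle norm_lev) H2.
  by split; last exact: cond2_cond3_with.
Qed.
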